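(* Let $k$ be a field and $A$ a $k$-algebra with $\dim_k A\geq 4$. Then exactly one of the following holds: (i) there exist $x,y\in A$ such that $\dim_k(k1+kx+ky+kxy)\geq 4$; (ii) there exists a $k$-subspace $V$ of $A$ with $A=k1\oplus V$ and $V\cdot V=0$; (iii) there exists a $k$-subspace $V$ of $A$ and elements $e,f\in A$ with $A=ke\oplus kf\oplus V$, $V\cdot V=eV=Vf=0$, $e^2=e$, $f^2=f$, $ef=fe=0$, $e+f=1$; equivalently $A\simeq \begin{bmatrix} k & V\\ 0 & k\end{bmatrix}$.
   Context: Here a $k$-algebra means an associative unital $k$-algebra, not necessarily commutative (case (iii) is non-commutative). For subsets $X,Y\subseteq A$, $X\cdot Y$ denotes the set (span) of products $xy$ with $x\in X$, $y\in Y$. *)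

From HB Require Import structures.
From mathcomp Require Import all_boot all_order all_algebra.
Set Implicit Arguments. Unset Strict Implicit. Unset Printing Implicit Defensive.
Import GRing.Theory.
Local Open Scope ring_scope.

(* Linear-algebra notions inside an arbitrary (possibly infinite-dimensional)
   associative unital k-algebra A : algType F. Subspaces are Prop-predicates. *)
Section LinAlg.
Variables (F : fieldType) (A : algType F).

Definition is_subspace (V : A -> Prop) : Prop :=
  V 0 /\ forall (c : F) (u v : A), V u -> V v -> V (c *: u + v).

Definition lin_indep4 (a b c d : A) : Prop :=
  forall α β γ δ : F, α *: a + β *: b + γ *: c + δ *: d = 0 ->
    [/\ α = 0, β = 0, γ = 0 & δ = 0].

Definition dim_ge4 (S : A -> Prop) : Prop :=
  exists a b c d, [/\ S a, S b, S c, S d & lin_indep4 a b c d].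

Definition span4 (a b c d : A) : A -> Prop :=
  fun w => exists α β γ δ : F, w = α *: a + β *: b + γ *: c + δ *: d.

Definition dsum_k1 (V : A -> Prop) : Prop :=
  (forall a : A, exists (c : F) (v : A), V v /\ a = c *: 1 + v) /\
  (forall (c : F) (v : A), V v -> c *: 1 + v = 0 -> c = 0 /\ v = 0).

Definition dsum_ef (e f : A) (V : A -> Prop) : Prop :=
  (forall a : A, exists (c d : F) (v : A), V v /\ a = c *: e + d *: f + v) /\
  (forall (c d : F) (v : A), V v -> c *: e + d *: f + v = 0 ->
     [/\ c = 0, d = 0 & v = 0]).

Definition sq_zero (V : A -> Prop) : Prop :=
  forall u v : A, V u -> V v -> u * v = 0.

Definition case_i : Prop :=
  exists x y : A, dim_ge4 (span4 1 x y (x * y)).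

Definition case_ii : Prop :=
  exists V : A -> Prop, [/\ is_subspace V, dsum_k1 V & sq_zero V].

Definition case_iii : Prop :=
  exists (V : A -> Prop) (e f : A),
    [/\ is_subspace V, dsum_ef e f V, sq_zero V,
        (forall v, V v -> e * v = 0) & (forall v, V v -> v * f = 0)] /\
    [/\ e * e = e, f * f = f, e * f = 0, f * e = 0 & e + f = 1].

End LinAlg.

From HB Require Import structures.
From mathcomp Require Import all_boot all_order all_algebra.
From mathcomp Require Import ring.
From Stdlib Require Import Classical.
Set Implicit Arguments. Unset Strict Implicit. Unset Printing Implicit Defensive.
Import GRing.Theory.
Local Open Scope ring_scope.

(* In cases (ii) and (iii) every product xy lies in k1 + kx + ky, which excludes (i), and
   (ii) has no idempotents besides 0 and 1 while (iii) has e. Conversely assume (i) fails.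
   If A has an idempotent e <> 0, 1, put f = 1 - e and look at the Peirce corners: one of
   eAf, fAe vanishes; they cannot both vanish, since in A = eAe x kf with dim A >= 4 one
   finds x, y with 1, x, y, xy independent; a nonzero fAe forces eAe = ke and fAf = kf,
   and V = fAe gives (iii). If A has no such idempotent, every x satisfies a quadratic
   equation over k, which has a root (otherwise k[x] is a field and 1, x, y, xy are
   independent for y outside k[x]); hence x = c + n with n^2 = 0, and the square-zero
   elements form a subspace V with V.V = 0, giving (ii). *)

Lemma idem_mulrr (R : pzRingType) (u x : R) : u * u = u -> x * u * u = x * u.
Proof. by move=> uu; rewrite -mulrA uu. Qed.

Lemma orth_mulrr (R : pzRingType) (u v x : R) : u * v = 0 -> x * u * v = 0.
Proof. by move=> uv; rewrite -mulrA uv mulr0. Qed.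

Section VectorSpace.
Variables (F : fieldType) (V : lmodType F).

Definition comb4 (v1 v2 v3 v4 : V) (a b c d : F) : V :=
  a *: v1 + b *: v2 + c *: v3 + d *: v4.

Lemma comb4D v1 v2 v3 v4 a b c d a' b' c' d' :
  comb4 v1 v2 v3 v4 a b c d + comb4 v1 v2 v3 v4 a' b' c' d' =
  comb4 v1 v2 v3 v4 (a + a') (b + b') (c + c') (d + d').
Proof.
rewrite /comb4 !scalerDl addrACA; congr (_ + _); rewrite addrACA; congr (_ + _).
exact: addrACA.
Qed.

Lemma comb4Z v1 v2 v3 v4 k a b c d :
  k *: comb4 v1 v2 v3 v4 a b c d = comb4 v1 v2 v3 v4 (k * a) (k * b) (k * c) (k * d).
Proof. by rewrite /comb4 !scalerDr !scalerA. Qed.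

Lemma comb4N v1 v2 v3 v4 a b c d :
  - comb4 v1 v2 v3 v4 a b c d = comb4 v1 v2 v3 v4 (- a) (- b) (- c) (- d).
Proof. by rewrite -scaleN1r comb4Z !mulN1r. Qed.

Lemma comb4_0 v1 v2 v3 v4 : 0 = comb4 v1 v2 v3 v4 0 0 0 0.
Proof. by rewrite /comb4 !scale0r !addr0. Qed.

Lemma comb4_1 v1 v2 v3 v4 : v1 = comb4 v1 v2 v3 v4 1 0 0 0.
Proof. by rewrite /comb4 !scale0r !addr0 scale1r. Qed.

Lemma comb4_2 v1 v2 v3 v4 : v2 = comb4 v1 v2 v3 v4 0 1 0 0.
Proof. by rewrite /comb4 !scale0r !addr0 add0r scale1r. Qed.

Lemma comb4_3 v1 v2 v3 v4 : v3 = comb4 v1 v2 v3 v4 0 0 1 0.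
Proof. by rewrite /comb4 !scale0r addr0 !add0r scale1r. Qed.

Lemma comb4_4 v1 v2 v3 v4 : v4 = comb4 v1 v2 v3 v4 0 0 0 1.
Proof. by rewrite /comb4 !scale0r !add0r scale1r. Qed.

Definition span1 (a : V) : V -> Prop := fun w => exists α, w = α *: a.
Definition span2 (a b : V) : V -> Prop := fun w => exists α β, w = α *: a + β *: b.
Definition span3 (a b c : V) : V -> Prop :=
  fun w => exists α β γ, w = α *: a + β *: b + γ *: c.

Definition lin_indep2 (a b : V) : Prop :=
  forall α β : F, α *: a + β *: b = 0 -> α = 0 /\ β = 0.
Definition lin_indep3 (a b c : V) : Prop :=
  forall α β γ : F, α *: a + β *: b + γ *: c = 0 -> [/\ α = 0, β = 0 & γ = 0].

Lemma scaler_eq0l (c : F) (v : V) : v != 0 -> c *: v = 0 -> c = 0.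
Proof. by move=> v_neq0 /eqP; rewrite scaler_eq0 (negPf v_neq0) orbF => /eqP. Qed.

Lemma addrZ_eq0 (s w : V) (c : F) : c != 0 -> s + c *: w = 0 -> w = - (c^-1 *: s).
Proof.
move=> c_neq0 /eqP; rewrite addr_eq0 => /eqP ->.
by rewrite scalerN opprK scalerA mulVf // scale1r.
Qed.

Lemma lin_indep2_ext a w : a != 0 -> ~ span1 a w -> lin_indep2 a w.
Proof.
move=> a_neq0 w_notin α β R.
have β0 : β = 0.
  apply/eqP; apply: contra_notT w_notin => β_neq0.
  by exists (- (β^-1 * α)); rewrite (addrZ_eq0 β_neq0 R) scalerA scaleNr.
by move: R; rewrite β0 scale0r addr0 => /(scaler_eq0l a_neq0).
Qed.

Lemma lin_indep3_ext a b w : lin_indep2 a b -> ~ span2 a b w -> lin_indep3 a b w.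
Proof.
move=> ab_indep w_notin α β γ R.
have γ0 : γ = 0.
  apply/eqP; apply: contra_notT w_notin => γ_neq0.
  exists (- (γ^-1 * α)), (- (γ^-1 * β)).
  by rewrite (addrZ_eq0 γ_neq0 R) scalerDr !scalerA opprD -!scaleNr.
by move: R; rewrite γ0 scale0r addr0 => /ab_indep [].
Qed.

Lemma lin_dep_combinations m n (u : 'I_n -> V) (M : 'M[F]_(m, n)) : (n < m)%N ->
  exists2 l : 'rV[F]_m, l != 0 & \sum_i l 0 i *: \sum_j M i j *: u j = 0.
Proof.
move=> lt_nm.
have /rowV0Pn [l /sub_kermxP lM0 l_neq0] : kermx M != 0.
  by rewrite kermx_eq0 /row_free neq_ltn (leq_ltn_trans (rank_leq_col M)).
exists l => //.
under eq_bigr do rewrite scaler_sumr.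
rewrite exchange_big big1 //= => j _.
under eq_bigr do rewrite scalerA.
rewrite -scaler_suml.
have -> : \sum_i l 0 i * M i j = (l *m M) 0 j by rewrite mxE.
by rewrite lM0 mxE scale0r.
Qed.

End VectorSpace.

(* Each atom is rewritten to coordinates and then hidden under [P], one at a time, so an
   atom must be listed before any atom occurring inside it. *)
Ltac comb4_ring v1 v2 v3 v4 :=
  let P := fresh "P" in
  pose P := comb4 v1 v2 v3 v4;
  try rewrite (comb4_1 v1 v2 v3 v4) -/P; try rewrite (comb4_2 v1 v2 v3 v4) -/P;
  try rewrite (comb4_3 v1 v2 v3 v4) -/P; try rewrite (comb4_4 v1 v2 v3 v4) -/P;
  try rewrite (comb4_0 v1 v2 v3 v4) -/P;
  rewrite /P; repeat progress rewrite ?comb4D ?comb4Z ?comb4N;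
  congr (comb4 _ _ _ _ _ _ _ _); ring.

Tactic Notation "comb_ring" uconstr(v1) uconstr(v2) := comb4_ring v1 v2 v1 v1.
Tactic Notation "comb_ring" uconstr(v1) uconstr(v2) uconstr(v3) := comb4_ring v1 v2 v3 v1.
Tactic Notation "comb_ring" uconstr(v1) uconstr(v2) uconstr(v3) uconstr(v4) :=
  comb4_ring v1 v2 v3 v4.

Section AlgebraSpan.
Variables (F : fieldType) (A : algType F).

Lemma lin_indep4_ext (a b c w : A) :
  lin_indep3 a b c -> ~ span3 a b c w -> lin_indep4 a b c w.
Proof.
move=> abc_indep w_notin α β γ δ R.
have δ0 : δ = 0.
  apply/eqP; apply: contra_notT w_notin => δ_neq0.
  exists (- (δ^-1 * α)), (- (δ^-1 * β)), (- (δ^-1 * γ)).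
  by rewrite (addrZ_eq0 δ_neq0 R) !scalerDr !scalerA !opprD -!scaleNr.
by move: R; rewrite δ0 scale0r addr0 => /abc_indep [].
Qed.

Lemma span3_of_not_lin_indep4 (a b c w : A) :
  lin_indep3 a b c -> ~ lin_indep4 a b c w -> span3 a b c w.
Proof. by move=> abc_indep w_dep; apply: NNPP => /(lin_indep4_ext abc_indep). Qed.

Lemma span3_not_lin_indep4 (u1 u2 u3 a b c d : A) :
  span3 u1 u2 u3 a -> span3 u1 u2 u3 b -> span3 u1 u2 u3 c -> span3 u1 u2 u3 d ->
  ~ lin_indep4 a b c d.
Proof.
move=> [a1 [a2 [a3 ->]]] [b1 [b2 [b3 ->]]] [c1 [c2 [c3 ->]]] [d1 [d2 [d3 ->]]] indep.
pose coef := [:: [:: a1; a2; a3]; [:: b1; b2; b3]; [:: c1; c2; c3]; [:: d1; d2; d3]].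
pose M : 'M[F]_(4, 3) := \matrix_(i, j) nth 0 (nth [::] coef i) j.
have [l l_neq0] := lin_dep_combinations (fun j : 'I_3 => nth 0 [:: u1; u2; u3] j) M erefl.
rewrite !big_ord_recr !big_ord0 /= !add0r !mxE /= => /indep [l0 l1 l2 l3].
move/eqP: l_neq0; apply; apply/rowP => -[[|[|[|[|//]]]] k_lt4]; rewrite mxE.
- by rewrite -l0; congr (l 0 _); apply: val_inj.
- by rewrite -l1; congr (l 0 _); apply: val_inj.
- by rewrite -l2; congr (l 0 _); apply: val_inj.
- by rewrite -l3; congr (l 0 _); apply: val_inj.
Qed.

Lemma span3_not_dim_ge4 (S : A -> Prop) (u1 u2 u3 : A) :
  (forall w, S w -> span3 u1 u2 u3 w) -> ~ dim_ge4 S.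
Proof.
move=> sub_span [a [b [c [d [/sub_span Sa /sub_span Sb /sub_span Sc /sub_span Sd]]]]].
exact: span3_not_lin_indep4 Sa Sb Sc Sd.
Qed.

Lemma lin_indep4_dim_ge4 (a b c d : A) : lin_indep4 a b c d -> dim_ge4 (span4 a b c d).
Proof.
exists a, b, c, d; split => //.
- by exists 1, 0, 0, 0; comb_ring a b c d.
- by exists 0, 1, 0, 0; comb_ring a b c d.
- by exists 0, 0, 1, 0; comb_ring a b c d.
- by exists 0, 0, 0, 1; comb_ring a b c d.
Qed.

Lemma lin_indep2_extend (u1 u2 : A) : dim_ge4 (fun _ : A => True) ->
  lin_indep2 u1 u2 -> exists y1 y2, lin_indep4 u1 u2 y1 y2.
Proof.
move=> dimA u_indep.
have notin_span3 (v1 v2 v3 : A) : exists y, ~ span3 v1 v2 v3 y.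
  apply: NNPP => all_in; apply: (span3_not_dim_ge4 (u1 := v1) (u2 := v2) (u3 := v3) _ dimA).
  by move=> w _; apply: NNPP => w_notin; apply: all_in; exists w.
have [y1 y1_notin] := notin_span3 u1 u2 u1.
have [y2 y2_notin] := notin_span3 u1 u2 y1.
exists y1, y2; apply: lin_indep4_ext y2_notin; apply: lin_indep3_ext u_indep _.
by move=> [α [β y1E]]; apply: y1_notin; exists α, β, 0; rewrite scale0r addr0.
Qed.

Lemma lin_indep4_sub3 (a b c d : A) :
  lin_indep4 a b c d -> lin_indep3 a b c /\ lin_indep3 a b d.
Proof.
move=> indep; split=> α β γ R.
- by have [] := indep α β γ 0; rewrite ?scale0r ?addr0.
- by have [] := indep α β 0 γ; rewrite ?scale0r ?addr0.
Qed.

Lemma mul_quadratic (x : A) (a b : F) : x * x = a%:A + b *: x -> forall p q r s : F,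
  (p%:A + q *: x) * (r%:A + s *: x) = (p * r + q * s * a)%:A + (p * s + q * r + q * s * b) *: x.
Proof.
move=> xx p q r s; rewrite mulrDl !mulrDr -!scalerAl -!scalerAr !mul1r !mulr1 xx.
by comb_ring x 1.
Qed.

End AlgebraSpan.

Section Exclusivity.
Variables (F : fieldType) (A : algType F).

Lemma mul_span3_not_case_i : (forall x y : A, span3 1 x y (x * y)) -> ~ case_i A.
Proof.
move=> mul_in [x [y]].
apply: (span3_not_dim_ge4 (u1 := 1) (u2 := x) (u3 := y)) => w [α [β [γ [δ ->]]]].
have [p [q [r ->]]] := mul_in x y.
by exists (α + δ * p), (β + δ * q), (γ + δ * r); comb_ring x y 1.
Qed.

Lemma case_ii_mul_span3 : case_ii A -> forall x y : A, span3 1 x y (x * y).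
Proof.
move=> [V [_ [decomp _] VV0]] x y.
have [p [v [Vv ->]]] := decomp x; have [q [w [Vw ->]]] := decomp y.
exists (- (p * q)), q, p.
rewrite mulrDl !mulrDr -!scalerAl -!scalerAr !mul1r !mulr1 (VV0 v w Vv Vw) addr0.
by comb_ring v w 1.
Qed.

Lemma case_iii_mul_span3 : case_iii A -> forall x y : A, span3 1 x y (x * y).
Proof.
move=> [V [e [f [[_ [decomp _] VV0 eV0 Vf0] [ee ff ef fe ef1]]]]] x y.
have [c [d [v [Vv ->]]]] := decomp x; have [c' [d' [w [Vw ->]]]] := decomp y.
have fw : f * w = w by rewrite -{2}[w]mul1r -ef1 mulrDl eV0 // add0r.
have ve : v * e = v by rewrite -{2}[v]mulr1 -ef1 mulrDr Vf0 // addr0.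
exists (- (d * c')), c', d.
rewrite -ef1 !mulrDl !mulrDr -!scalerAl -!scalerAr ee ff ef fe eV0 // Vf0 //.
rewrite VV0 // fw ve !scaler0 !addr0 !add0r.
by comb_ring v w e f.
Qed.

Lemma case_ii_idempotent_trivial : case_ii A -> forall e : A, e * e = e -> e = 0 \/ e = 1.
Proof.
move=> [V [[V0 Vlin] [decomp uniq] VV0]] e ee.
have [c [n [Vn eE]]] := decomp e.
have [c2c n0] : c * c - c = 0 /\ (c + c - 1) *: n + 0 = 0.
  apply: uniq (Vlin (c + c - 1) _ _ Vn V0) _.
  rewrite addr0 -(subrr e) -{1}ee eE mulrDl !mulrDr -!scalerAl -!scalerAr !mul1r !mulr1.
  by rewrite VV0 // addr0; comb_ring n 1.
have : c * (c - 1) = 0 by rewrite mulrBr mulr1.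
move/eqP; rewrite mulf_eq0 subr_eq0 => /orP [/eqP c0 | /eqP c1].
- left; move: n0; rewrite c0 add0r sub0r scaleN1r addr0 => /eqP.
  by rewrite oppr_eq0 eE c0 scale0r add0r => /eqP.
- right; move: n0; rewrite c1 addrK scale1r addr0 => n0.
  by rewrite eE c1 n0 scale1r addr0.
Qed.

Lemma case_iii_nontrivial_idempotent : case_iii A -> exists e : A, [/\ e * e = e, e != 0 & e != 1].
Proof.
move=> [V [e [f [[[V0 _] [_ uniq] _ _ _] [ee _ _ _ ef1]]]]].
exists e; split => //; apply/eqP => eE.
- have := uniq 1 0 0 V0; rewrite eE scaler0 scale0r !addr0 => /(_ erefl) [/eqP].
  by rewrite oner_eq0.
- have f0 : f = 0 by apply: (addrI e); rewrite addr0 ef1 eE.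
  have := uniq 0 1 0 V0; rewrite f0 scaler0 scale0r !addr0 => /(_ erefl) [_ /eqP].
  by rewrite oner_eq0.
Qed.

Lemma case_ii_not_case_iii : case_ii A -> ~ case_iii A.
Proof.
move=> /case_ii_idempotent_trivial idem /case_iii_nontrivial_idempotent [e [/idem [] -> /eqP]] //.
by rewrite eqxx.
Qed.

End Exclusivity.

Definition complementary_idempotents (F : fieldType) (A : algType F) (e f : A) :=
  [/\ e * e = e, f * f = f, e * f = 0, f * e = 0 & e + f = 1].

Lemma complementary_idempotentsC (F : fieldType) (A : algType F) (e f : A) :
  complementary_idempotents e f -> complementary_idempotents f e.
Proof. by case=> ee ff ef fe ef1; split=> //; rewrite addrC. Qed.

Lemma complementary_idempotents_subr (F : fieldType) (A : algType F) (e : A) :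
  e * e = e -> complementary_idempotents e (1 - e).
Proof.
move=> ee; split=> //; last by rewrite addrC subrK.
- by rewrite mulrBl mul1r mulrBr mulr1 ee subrr subr0.
- by rewrite mulrBr mulr1 ee subrr.
- by rewrite mulrBl mul1r ee subrr.
Qed.

Section WithoutCaseI.
Variables (F : fieldType) (A : algType F).
Hypothesis not_case_i : ~ case_i A.

Lemma not_lin_indep4_mul (x y : A) : ~ lin_indep4 1 x y (x * y).
Proof. by move=> indep; apply: not_case_i; exists x, y; exact: lin_indep4_dim_ge4. Qed.

Lemma mul_in_span3 (x y : A) : lin_indep3 1 x y -> span3 1 x y (x * y).
Proof. by move/span3_of_not_lin_indep4; apply; apply: not_lin_indep4_mul. Qed.

Lemma sqr_in_span3 (x y : A) : lin_indep3 1 x y -> span3 1 x y (x * x).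
Proof.
move=> indep.
have indep' : lin_indep3 1 x (x + y).
  move=> α β γ R; have [-> βγ0 γ0] : [/\ α = 0, β + γ = 0 & γ = 0].
    by apply: indep; rewrite -R; comb_ring x y 1.
  by move: βγ0; rewrite γ0 addr0.
have [p [q [r xyE]]] := mul_in_span3 indep.
have [p' [q' [r' xxyE]]] := mul_in_span3 indep'.
exists (p' - p), (q' + r' - q), (r' - r).
by rewrite -[x * x](addrK (x * y)) -mulrDr xyE xxyE; comb_ring x y 1.
Qed.

Lemma sqr0_mul (n m : A) : n * n = 0 -> m * m = 0 -> n * m = 0.
Proof.
move=> nn mm; have [-> | n_neq0] := eqVneq n 0; first by rewrite mul0r.
have n_notin : ~ span1 1 n.
  move=> [c nE]; move/eqP: n_neq0; apply; move: nn.
  rewrite nE -scalerAl mul1r scalerA => /(scaler_eq0l (oner_neq0 A)) /eqP.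
  by rewrite mulf_eq0 orbb => /eqP ->; rewrite scale0r.
have [q nmE] : exists q, n * m = q *: n.
  have [[p [q ->]] | m_notin] := classic (span2 1 n m).
    by exists p; rewrite mulrDr -!scalerAr mulr1 nn scaler0 addr0.
  have indep := lin_indep3_ext (lin_indep2_ext (oner_neq0 A) n_notin) m_notin.
  have [p [q [r nmE]]] := mul_in_span3 indep.
  have [_ p0 /eqP] : [/\ r * p = 0, p + r * q = 0 & r * r = 0].
    apply: indep; rewrite -(mul0r m) -nn -mulrA nmE !mulrDr -!scalerAr mulr1 nn.
    by rewrite scaler0 addr0 nmE; comb_ring m n 1.
  rewrite mulf_eq0 orbb => /eqP r0; move: p0; rewrite r0 mul0r addr0 => p0.
  by exists q; rewrite nmE p0 r0 !scale0r add0r addr0.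
have : (q * q) *: n = 0 by rewrite -scalerA -nmE scalerAl -nmE -mulrA mm mulr0.
move/(scaler_eq0l n_neq0)/eqP; rewrite mulf_eq0 orbb => /eqP q0.
by rewrite nmE q0 scale0r.
Qed.

Hypothesis dimA : dim_ge4 (fun _ : A => True).

Lemma exists_lin_indep4_1 (x : A) : ~ span1 1 x -> exists y1 y2, lin_indep4 1 x y1 y2.
Proof. by move/(lin_indep2_ext (oner_neq0 A)); apply: lin_indep2_extend. Qed.

Lemma sqr_quadratic (x : A) : ~ span1 1 x -> exists a b : F, x * x = a%:A + b *: x.
Proof.
move=> /exists_lin_indep4_1 [y1 [y2 indep]].
have [/sqr_in_span3 [s1 [t1 [u1 xxE1]]] /sqr_in_span3 [s2 [t2 [u2 xxE2]]]] :=
  lin_indep4_sub3 indep.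
have [_ _ u1_0 _] : [/\ s1 - s2 = 0, t1 - t2 = 0, u1 = 0 & - u2 = 0].
  by apply: indep; rewrite -(subrr (x * x)) {1}xxE1 xxE2; comb_ring x y1 y2 1.
by exists s1, t1; rewrite xxE1 u1_0 scale0r addr0.
Qed.

Lemma quadratic_root (x : A) (a b : F) : ~ span1 1 x -> x * x = a%:A + b *: x ->
  exists l, l * l = a + b * l.
Proof.
move=> x_notin xx; apply: NNPP => no_root.
have [y [_ /lin_indep4_sub3 [indep _]]] := exists_lin_indep4_1 x_notin.
apply: (@not_lin_indep4_mul x y) => α β γ δ R.
pose N := (γ + δ * b) * γ - δ * δ * a.
(* [s] is the conjugate of [γ + δ x] in k[x], so their product is the norm [N]. *)
pose s := (γ + δ * b)%:A + (- δ) *: x.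
have sE : s * (γ%:A + δ *: x) = N%:A by rewrite (mul_quadratic xx) /N; comb_ring x 1.
have : s * (α%:A + β *: x) + N *: y = 0.
  rewrite -[N *: y]mulr_algl -sE -mulrA -mulrDr -[RHS](mulr0 s) -R.
  by congr (s * _); rewrite mulrDl mulr_algl -scalerAl !addrA.
rewrite (mul_quadratic xx) => /indep [_ _ N0].
have δ0 : δ = 0.
  apply/eqP; apply: contra_notT no_root => δ_neq0; exists (- γ / δ).
  apply/eqP; rewrite -subr_eq0.
  have -> : - γ / δ * (- γ / δ) - (a + b * (- γ / δ)) = N / (δ * δ) by rewrite /N; field.
  by rewrite N0 mul0r.
have γ0 : γ = 0.
  by move/eqP: N0; rewrite /N δ0 !mul0r addr0 subr0 mulf_eq0 orbb => /eqP.
move: R; rewrite γ0 δ0 !scale0r !addr0 => R.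
have [-> -> _] : [/\ α = 0, β = 0 & (0 : F) = 0] by apply: indep; rewrite scale0r addr0.
by [].
Qed.

Section TrivialIdempotents.
Hypothesis idempotent_trivial : forall e : A, e * e = e -> e = 0 \/ e = 1.

Lemma scalar_add_sqr0 (x : A) : exists c n, n * n = 0 /\ x = c%:A + n.
Proof.
have [[c ->] | x_notin] := classic (span1 1 x); first by exists c, 0; rewrite mulr0 addr0.
have [a [b xx]] := sqr_quadratic x_notin.
have [l ll] := quadratic_root x_notin xx.
pose n := (- l)%:A + 1 *: x; pose k := b - l - l.
have xE : x = l%:A + n by rewrite /n scale1r addrA -scalerDl subrr scale0r add0r.
have nn : n * n = k *: n.
  have aE : a = l * l - b * l by rewrite ll addrK.
  by rewrite (mul_quadratic xx) /n /k aE; comb_ring x 1.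
exists l, n; split => //.
have [k0 | k_neq0] := eqVneq k 0; first by rewrite nn k0 scale0r.
have ee : (k^-1 *: n) * (k^-1 *: n) = k^-1 *: n.
  by rewrite -scalerAl -scalerAr nn !scalerA mulfVK.
exfalso; case: (idempotent_trivial ee) => eE; apply: x_notin.
- exists l; move/eqP: eE; rewrite scaler_eq0 invr_eq0 (negPf k_neq0) /= => /eqP n0.
  by rewrite xE n0 addr0.
- exists (l + k); have nE : n = k%:A by rewrite -eE scalerA mulfV // scale1r.
  by rewrite xE nE -scalerDl.
Qed.

Lemma case_ii_of_trivial_idempotents : case_ii A.
Proof.
exists (fun n => n * n = 0); split.
- split=> [|c u v uu vv]; first by rewrite mulr0.
  rewrite mulrDl !mulrDr -!scalerAl -!scalerAr uu vv (sqr0_mul uu vv) (sqr0_mul vv uu).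
  by rewrite !scaler0 !addr0.
- split=> [a | c v vv cv0]; first by have [c [n [nn ->]]] := scalar_add_sqr0 a; exists c, n.
  have vE : v = - c%:A by apply/eqP; rewrite -addr_eq0 addrC cv0.
  have c0 : c = 0.
    move: vv; rewrite vE mulrNN -scalerAl mul1r scalerA => /(scaler_eq0l (oner_neq0 A)) /eqP.
    by rewrite mulf_eq0 orbb => /eqP.
  by rewrite vE c0 scale0r oppr0.
- by move=> u v; apply: sqr0_mul.
Qed.

End TrivialIdempotents.

Section PeirceDecomposition.
Variables e f : A.
Hypotheses (ef_compl : complementary_idempotents e f) (e_neq0 : e != 0) (f_neq0 : f != 0).

Let ee : e * e = e. Proof. by case: ef_compl. Qed.
Let ff : f * f = f. Proof. by case: ef_compl. Qed.
Let ef : e * f = 0. Proof. by case: ef_compl. Qed.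
Let fe : f * e = 0. Proof. by case: ef_compl. Qed.
Let ef1 : e + f = 1. Proof. by case: ef_compl. Qed.

Lemma peirce_decomp (y : A) : y = e * y * e + e * y * f + f * y * e + f * y * f.
Proof. by rewrite -{1}[y]mul1r -{1}[y]mulr1 -ef1 !mulrDl !mulrDr !mulrA !addrA. Qed.

Ltac corner_simp H :=
  repeat progress rewrite ?mulrDl ?mulrDr -?scalerAl -?scalerAr in H;
  repeat progress rewrite ?mulrA ?ee ?ff ?ef ?fe ?(idem_mulrr _ ee) ?(idem_mulrr _ ff)
    ?(orth_mulrr _ ef) ?(orth_mulrr _ fe) ?mul0r ?mulr0 ?mul1r ?mulr1
    ?scaler0 ?scale0r ?addr0 ?add0r in H.

Ltac corner p q R H :=
  have H := congr1 (fun t => p * t * q) R; rewrite /= in H; corner_simp H.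

Lemma off_diagonal_corner0 : (forall y, e * y * f = 0) \/ (forall y, f * y * e = 0).
Proof.
apply: NNPP => /not_or_and [/not_all_ex_not [y1 /eqP eyf_neq0]].
move=> /not_all_ex_not [y2 /eqP fye_neq0].
apply: (@not_lin_indep4_mul e (e * y1 * f + f * y2 * e)) => α β γ δ R.
corner f e R R_fe; have γ0 := scaler_eq0l fye_neq0 R_fe; rewrite γ0 in R.
corner e f R R_ef; have δ0 := scaler_eq0l eyf_neq0 R_ef; rewrite δ0 in R.
corner f f R R_ff; have α0 := scaler_eq0l f_neq0 R_ff; rewrite α0 in R.
by corner_simp R; have β0 := scaler_eq0l e_neq0 R.
Qed.

Lemma corner_scalar : (forall a, span1 e (e * a * e)) \/ (forall b, span1 f (f * b * f)).
Proof.
apply: NNPP => /not_or_and [/not_all_ex_not [a eae_notin] /not_all_ex_not [b fbf_notin]].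
apply: (@not_lin_indep4_mul (e * a * e + f * b * f) e) => α β γ δ R.
corner f f R R_ff; have [α0 β0] := lin_indep2_ext f_neq0 fbf_notin R_ff; rewrite α0 β0 in R.
by corner e e R R_ee; have [γ0 δ0] := lin_indep2_ext e_neq0 eae_notin R_ee.
Qed.

Lemma corner_ff_scalar (c : A) : f * c * e != 0 -> forall b, span1 f (f * b * f).
Proof.
move=> fce_neq0 b; apply: NNPP => fbf_notin.
apply: (@not_lin_indep4_mul (f * b * f + f * c * e) e) => α β γ δ R.
corner f f R R_ff; have [α0 β0] := lin_indep2_ext f_neq0 fbf_notin R_ff; rewrite α0 β0 in R.
corner e e R R_ee; have γ0 := scaler_eq0l e_neq0 R_ee; rewrite γ0 in R.
by corner_simp R; have δ0 := scaler_eq0l fce_neq0 R.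
Qed.

Lemma corner_ee_scalar (c : A) : f * c * e != 0 -> forall a, span1 e (e * a * e).
Proof.
move=> fce_neq0 a; apply: NNPP => eae_notin.
apply: (@not_lin_indep4_mul f (e * a * e + f * c * e)) => α β γ δ R.
corner e e R R_ee; have [α0 γ0] := lin_indep2_ext e_neq0 eae_notin R_ee; rewrite α0 γ0 in R.
corner f f R R_ff; have β0 := scaler_eq0l f_neq0 R_ff; rewrite β0 in R.
by corner_simp R; have δ0 := scaler_eq0l fce_neq0 R.
Qed.

Lemma case_iii_of_corners : (forall a, span1 e (e * a * e)) ->
  (forall b, span1 f (f * b * f)) -> (forall y, e * y * f = 0) -> case_iii A.
Proof.
move=> eAe fAf eAf0.
exists (fun v => f * v * e = v), e, f; split; split => //.
- split=> [|c u v fue fve]; first by rewrite mulr0 mul0r.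
  by rewrite mulrDr mulrDl -scalerAr -scalerAl fue fve.
- split=> [a | c d v fve R].
  + have [c eaeE] := eAe a; have [d fafE] := fAf a.
    exists c, d, (f * a * e); split; first by rewrite !mulrA ff idem_mulrr.
    by rewrite {1}(peirce_decomp a) eaeE fafE eAf0 addr0; comb_ring (f * a * e) e f.
  + rewrite -fve in R.
    corner e e R R_ee; have c0 := scaler_eq0l e_neq0 R_ee; rewrite c0 in R.
    corner f f R R_ff; have d0 := scaler_eq0l f_neq0 R_ff; rewrite d0 in R.
    by corner_simp R; rewrite -fve R.
- by move=> u v <- <-; rewrite !mulrA (orth_mulrr _ ef) !mul0r.
- by move=> v <-; rewrite !mulrA ef !mul0r.
- by move=> v <-; rewrite (orth_mulrr _ ef).
Qed.

Lemma block_diagonal_lin_indep3 (y1 y2 : A) :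
  (forall y, e * y * f = 0) -> (forall y, f * y * e = 0) ->
  (forall b, span1 f (f * b * f)) -> lin_indep4 e f y1 y2 ->
  lin_indep3 e (e * y1 * e) (e * y2 * e).
Proof.
move=> eAf0 fAe0 fAf indep α β γ R.
have [d1 fy1f] := fAf y1; have [d2 fy2f] := fAf y2.
have y1E : y1 = e * y1 * e + d1 *: f by rewrite {1}(peirce_decomp y1) eAf0 fAe0 fy1f !addr0.
have y2E : y2 = e * y2 * e + d2 *: f by rewrite {1}(peirce_decomp y2) eAf0 fAe0 fy2f !addr0.
have [-> _ -> ->] : [/\ α = 0, - (β * d1 + γ * d2) = 0, β = 0 & γ = 0].
  apply: indep; rewrite -R {1}y1E {1}y2E.
  by comb_ring (e * y1 * e) (e * y2 * e) e f.
by [].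
Qed.

Lemma not_block_diagonal : (forall y, e * y * f = 0) -> (forall y, f * y * e = 0) ->
  (forall b, span1 f (f * b * f)) -> False.
Proof.
move=> eAf0 fAe0 fAf.
have ef_indep : lin_indep2 e f.
  move=> α β R; corner e e R R_ee; have α0 := scaler_eq0l e_neq0 R_ee; rewrite α0 in R.
  by corner_simp R; have β0 := scaler_eq0l f_neq0 R.
have [y1 [y2 /(block_diagonal_lin_indep3 eAf0 fAe0 fAf) z_indep]] :=
  lin_indep2_extend dimA ef_indep.
have z_indep1 : lin_indep3 1 (e * y1 * e) (e * y2 * e).
  move=> α β γ R; corner f f R R_ff; have α0 := scaler_eq0l f_neq0 R_ff.
  move: R; rewrite α0 scale0r add0r => R.
  have [_ -> ->] : [/\ (0 : F) = 0, β = 0 & γ = 0] by apply: z_indep; rewrite scale0r add0r.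
  by [].
have [p [q [r zzE]]] := mul_in_span3 z_indep1.
corner f f zzE zzE_ff; have p0 := scaler_eq0l f_neq0 (esym zzE_ff).
rewrite p0 scale0r add0r in zzE; corner_simp zzE.
(* the f-coordinates r + 1 and q + 1 + q r make the determinant of the final system equal to 1 *)
apply: (@not_lin_indep4_mul
  (e * y1 * e + (r + 1) *: f) (e * y2 * e + (q + 1 + q * r) *: f)) => α β γ δ R.
corner e e R R_ee; rewrite zzE in R_ee.
have [α0 βδ γδ] : [/\ α = 0, β + δ * q = 0 & γ + δ * r = 0].
  by apply: z_indep; rewrite -R_ee; comb_ring (e * y1 * e) (e * y2 * e) e.
corner f f R R_ff.
have det0 : α + β * (r + 1) + γ * (q + 1 + q * r) + δ * ((r + 1) * (q + 1 + q * r)) = 0.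
  by apply: (scaler_eq0l f_neq0); rewrite -R_ff; comb_ring f f.
have δ0 : δ = 0.
  have -> : δ = α + β * (r + 1) + γ * (q + 1 + q * r) + δ * ((r + 1) * (q + 1 + q * r))
    - α - (β + δ * q) * (r + 1) - (γ + δ * r) * (q + 1 + q * r) by ring.
  by rewrite det0 α0 βδ γδ !mul0r !subr0.
by move: βδ γδ; rewrite δ0 !mul0r !addr0.
Qed.

End PeirceDecomposition.

Lemma case_iii_of_off_diagonal0 (e f : A) : complementary_idempotents e f ->
  e != 0 -> f != 0 -> (forall y, e * y * f = 0) -> case_iii A.
Proof.
move=> ef_compl e_neq0 f_neq0 eAf0.
have fe_compl := complementary_idempotentsC ef_compl.
have [c fce_neq0] : exists c, f * c * e != 0.
  apply: NNPP => fAe_eq0.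
  have fAe0 y : f * y * e = 0 by apply/eqP; apply: contra_notT fAe_eq0; exists y.
  have [eAe | fAf] := corner_scalar ef_compl e_neq0 f_neq0.
  - exact: not_block_diagonal fe_compl f_neq0 e_neq0 fAe0 eAf0 eAe.
  - exact: not_block_diagonal ef_compl e_neq0 f_neq0 eAf0 fAe0 fAf.
have eAe := corner_ee_scalar ef_compl e_neq0 f_neq0 fce_neq0.
have fAf := corner_ff_scalar ef_compl e_neq0 f_neq0 fce_neq0.
exact: case_iii_of_corners ef_compl e_neq0 f_neq0 eAe fAf eAf0.
Qed.

Lemma case_ii_or_case_iii : case_ii A \/ case_iii A.
Proof.
have [[e [ee e_neq0 e_neq1]] | no_idem] := classic (exists e : A, [/\ e * e = e, e != 0 & e != 1]).
  right; have ef_compl := complementary_idempotents_subr ee.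
  have f_neq0 : 1 - e != 0 by rewrite subr_eq0 eq_sym.
  have [eAf0 | fAe0] := off_diagonal_corner0 ef_compl e_neq0 f_neq0.
  - exact: case_iii_of_off_diagonal0 ef_compl e_neq0 f_neq0 eAf0.
  - exact: case_iii_of_off_diagonal0 (complementary_idempotentsC ef_compl) f_neq0 e_neq0 fAe0.
left; apply: case_ii_of_trivial_idempotents => e ee.
apply: NNPP => /not_or_and [/eqP e_neq0 /eqP e_neq1]; apply: no_idem.
by exists e.
Qed.

End WithoutCaseI.

Unset Implicit Arguments.

Theorem theorem5p7 (F : fieldType) (A : algType F) :
  dim_ge4 (fun _ : A => True) ->
  [\/ case_i A /\ ~ case_ii A /\ ~ case_iii A,
      ~ case_i A /\ case_ii A /\ ~ case_iii A
    | ~ case_i A /\ ~ case_ii A /\ case_iii A].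
Proof.
move=> dimA.
have not_i_ii (ii : case_ii A) : ~ case_i A := mul_span3_not_case_i (case_ii_mul_span3 ii).
have not_i_iii (iii : case_iii A) : ~ case_i A := mul_span3_not_case_i (case_iii_mul_span3 iii).
have [i | not_i] := classic (case_i A).
  by apply: Or31; split=> //; split=> [/not_i_ii | /not_i_iii].
have [ii | iii] := case_ii_or_case_iii not_i dimA.
- by apply: Or32; split=> //; split=> //; exact: case_ii_not_case_iii.
- by apply: Or33; split=> //; split=> // /case_ii_not_case_iii.
Qed.
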